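(* Let $R$ be a ring, $n\ge1$ and $\frac{A}{B}\in\mathcal{F}_n(R)$. There exists a unique pair $(U_1,V_1)$ of polynomials in $R[X]$ with $\deg U_1=n-1$, $\deg V_1\le n-1$ and $AU_1+BV_1=X^{2n-1}$. Let $\phi_n(\frac{A}{B})$ be the opposite of the coefficient of $X^{n-1}$ in $V_1$. Then the resulting scheme morphism $\phi_n:\mathcal{F}_n\to\mathbf{A}^1$ is $\mathbf{G}_a$-equivariant; in particular $\mathcal{F}_n\simeq\phi_n^{-1}(0)\times\mathbf{A}^1$.
   Context: For a ring $R$ and $n\ge1$, $\mathcal{F}_n(R)$ is the set of pairs $(A,B)$, written $\frac{A}{B}$, of polynomials in $R[X]$ with $A$ monic of degree $n$, $\deg B<n$ and $\mathrm{res}_{n,n}(A,B)\in R^\times$; $\mathcal{F}_n$ is the representing scheme (an open subscheme of $\mathbf{A}^{2n}$ over a base field $k$). The additive group $\mathbf{G}_a$ acts on $\mathcal{F}_n$ by $h\cdot\frac{A}{B}=\frac{A+hB}{B}$ and on $\mathbf{A}^1$ by translation. *)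

From HB Require Import structures.
From mathcomp Require Import all_boot all_order all_algebra.
Set Implicit Arguments. Unset Strict Implicit. Unset Printing Implicit Defensive.
Import Order.TTheory GRing.Theory.
Local Open Scope ring_scope.

(* Sylvester matrix S_{n,n}(A,B): the matrix (in the monomial bases) of the
   R-linear map (U,V) |-> A*U + B*V, deg U < n, deg V < n, into polynomials
   of degree < 2n.  Row i < n is X^i * A, row n + i is X^i * B;
   column j is the coefficient of X^j.  res_{n,n}(A,B) is its determinant
   (up to a sign convention, irrelevant for being a unit). *)
Definition sylv_nn (R : comUnitRingType) (n : nat) (A B : {poly R})
  : 'M[R]_(n + n) :=
  \matrix_(i < n + n, j < n + n)
    (if (i < n)%N then ('X^i * A)`_j else ('X^(i - n) * B)`_j).

Definition res_nn (R : comUnitRingType) (n : nat) (A B : {poly R}) : R :=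
  \det (sylv_nn n A B).

Definition inF (R : comUnitRingType) (n : nat) (A B : {poly R}) : bool :=
  [&& A \is monic, size A == n.+1, (size B <= n)%N
    & res_nn n A B \is a GRing.unit].

Definition bezout_sol (R : comUnitRingType) (n : nat) (A B U V : {poly R})
  : Prop :=
  [/\ size U = n, (size V <= n)%N & A * U + B * V = 'X^(2 * n - 1)].

Definition is_phi (R : comUnitRingType) (n : nat) (A B : {poly R}) (c : R)
  : Prop :=
  exists U V, bezout_sol n A B U V /\ c = - V`_(n.-1).

From HB Require Import structures.
From mathcomp Require Import all_boot all_order all_algebra zify.
Import GRing.Theory.
Set Implicit Arguments.
Unset Strict Implicit.
Local Open Scope ring_scope.

(* The Sylvester matrix of (A, B) is the matrix of (U, V) |-> A U + B V on
   pairs of polynomials of degree < n, so when it is invertible every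
   polynomial of degree < 2n is uniquely of the form A U + B V.  For the
   right-hand side X^(2n-1), comparing top coefficients with A monic of degree
   n forces the coefficient of X^(n-1) in U1 to be 1.  Replacing A by A + hB
   multiplies the Sylvester matrix by a unipotent block matrix, so F_n is
   stable, and (U1, V1 - h U1) is the Bezout pair of (A + hB, B), which
   raises phi_n by h.  Hence A/B decomposes uniquely as h.((A - hB)/B) with
   h = phi_n(A/B) and (A - hB)/B in the fibre over 0. *)

Section Sylvester.
Variables (R : comUnitRingType) (n : nat).
Implicit Types (A B P U V : {poly R}) (u v : 'rV[R]_n).

Lemma size_rVpoly m (v : 'rV[R]_m) : (size (rVpoly v) <= m)%N.
Proof. exact: size_poly. Qed.

Definition mulX_mx P : 'M[R]_(n, n + n) := \matrix_(i < n, j < n + n) ('X^i * P)`_j.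

Lemma mul_mulX_mx u P : u *m mulX_mx P = poly_rV (P * rVpoly u).
Proof.
apply/rowP => j; rewrite !mxE /rVpoly poly_def mulr_sumr coef_sum.
apply: eq_bigr => i _; rewrite !mxE.
case: insubP => [k _ /val_inj -> | ]; last by rewrite ltn_ord.
by rewrite -scalerAr coefZ [P * _]mulrC.
Qed.

Lemma sylv_nn_col A B : sylv_nn n A B = col_mx (mulX_mx A) (mulX_mx B).
Proof.
apply/matrixP => i j; rewrite !mxE; case: splitP => k ->; rewrite mxE //.
by rewrite addKn.
Qed.

Lemma mul_sylv_nn u v A B :
  row_mx u v *m sylv_nn n A B = poly_rV (A * rVpoly u + B * rVpoly v).
Proof. by rewrite sylv_nn_col mul_row_col !mul_mulX_mx linearD. Qed.

Lemma sylv_nn_shift A B h :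
  sylv_nn n (A + h *: B) B = block_mx 1%:M h%:M 0 1%:M *m sylv_nn n A B.
Proof.
rewrite !sylv_nn_col mul_block_col !mul1mx mul0mx add0r mul_scalar_mx.
congr col_mx; apply/matrixP => i j.
by rewrite !mxE mulrDr coefD -scalerAr coefZ.
Qed.

Lemma res_nn_shift A B h : res_nn n (A + h *: B) B = res_nn n A B.
Proof. by rewrite /res_nn sylv_nn_shift det_mulmx det_ublock !det1 !mul1r. Qed.

Lemma size_bezout_comb A B U V :
    (size A <= n.+1)%N -> (size B <= n.+1)%N -> (size U <= n)%N -> (size V <= n)%N ->
  (size (A * U + B * V)%R <= n + n)%N.
Proof.
move=> sA sB sU sV; rewrite (leq_trans (size_polyD _ _)) // geq_max.
by apply/andP; split; apply: leq_trans (size_polyMleq _ _) _; lia.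
Qed.

Lemma bezout_comb_exists_unique A B P :
    res_nn n A B \is a GRing.unit -> (size A <= n.+1)%N -> (size B <= n.+1)%N ->
    (size P <= n + n)%N ->
  exists! UV : {poly R} * {poly R},
    [/\ (size UV.1 <= n)%N, (size UV.2 <= n)%N & A * UV.1 + B * UV.2 = P].
Proof.
move=> uS sA sB sP; have uM : sylv_nn n A B \in unitmx by rewrite unitmxE.
pose w := poly_rV P *m invmx (sylv_nn n A B).
have wM : w *m sylv_nn n A B = poly_rV P by rewrite mulmxKV.
exists (rVpoly (lsubmx w), rVpoly (rsubmx w)); split.
  split; rewrite /= ?size_rVpoly //.
  rewrite -[RHS](poly_rV_K sP) -wM -{3}(hsubmxK w) mul_sylv_nn poly_rV_K //.
  by apply: size_bezout_comb => //; apply: size_rVpoly.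
move=> [U V] [/= sU sV eP].
have : row_mx (poly_rV U) (poly_rV V) *m sylv_nn n A B = poly_rV P.
  by rewrite mul_sylv_nn !poly_rV_K ?eP.
rewrite -wM => /(can_inj (mulmxK uM)) <-.
by rewrite row_mxKl row_mxKr !poly_rV_K.
Qed.
End Sylvester.

Lemma coef_monicM_top (R : nzRingType) (A U : {poly R}) (m k : nat) :
    A \is monic -> size A = m.+1 -> (size U <= k.+1)%N ->
  (A * U)`_(m + k) = U`_k.
Proof.
move=> mA sA sU; have [ltUk | geUk] := ltnP (size U) k.+1.
  rewrite !nth_default //; apply: leq_trans (size_polyMleq _ _) _.
  by rewrite sA; lia.
have U0 : U != 0 by rewrite -size_poly_gt0 (leq_trans _ geUk).
have eU : size U = k.+1 by apply/eqP; rewrite eqn_leq sU geUk.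
have := lead_coef_monicM U mA.
by rewrite /lead_coef size_monicM // sA eU addSn addnS.
Qed.

Section FractionSpace.
Variables (R : comUnitRingType) (n : nat).
Hypothesis n_gt0 : (0 < n)%N.
Implicit Types (A B U V : {poly R}) (c h : R).

Lemma inF_bezout_coef A B U V : inF n A B -> (size U <= n)%N -> (size V <= n)%N ->
  A * U + B * V = 'X^(2 * n - 1) -> U`_n.-1 = 1.
Proof.
case/and4P => mA /eqP sA sB _ sU sV /(congr1 (fun p : {poly R} => p`_(n + n.-1))).
have -> : (2 * n - 1 = n + n.-1)%N by lia.
rewrite coefD coefXn eqxx coef_monicM_top ?prednK //.
rewrite [X in _ + X = _]nth_default ?addr0 //.
by apply: leq_trans (size_polyMleq _ _) _; lia.
Qed.

Lemma bezout_sol_exists_unique A B : inF n A B ->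
  exists! UV : {poly R} * {poly R}, bezout_sol n A B UV.1 UV.2.
Proof.
move=> F; case/and4P: (F) => _ /eqP sA sB uS.
have sX : (size ('X^(2 * n - 1) : {poly R}) <= n + n)%N by rewrite size_polyXn; lia.
have [[U V] [[/= sU sV e] uniqUV]] :=
  bezout_comb_exists_unique uS (eq_leq sA) (leqW sB) sX.
have U1 := inF_bezout_coef F sU sV e.
have eU : size U = n.
  apply/eqP; rewrite eqn_leq sU /= -(prednK n_gt0) ltnNge.
  by apply/negP => /(nth_default 0); rewrite U1 => /eqP; rewrite oner_eq0.
exists (U, V); split=> [|[U' V'] [/= sU' sV' e']]; first by split.
by apply: uniqUV; split; rewrite /= ?sU'.
Qed.

Lemma is_phi_exists A B : inF n A B -> exists c, is_phi n A B c.
Proof.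
by case/bezout_sol_exists_unique => -[U V] [b _]; exists (- V`_n.-1), U, V.
Qed.

Lemma inF_shift A B h : inF n A B -> inF n (A + h *: B) B.
Proof.
case/and4P => mA /eqP sA sB uS.
have shB : (size (h *: B) < size A)%N.
  by rewrite sA ltnS (leq_trans (size_scale_leq _ _)).
apply/and4P; split => //.
- by rewrite monicE lead_coefDl // -monicE.
- by rewrite size_polyDl // sA.
- by rewrite res_nn_shift.
Qed.

Lemma is_phi_shift A B c h : inF n A B ->
  is_phi n A B c -> is_phi n (A + h *: B) B (c + h).
Proof.
move=> F [U [V [[sU sV e] ->]]].
have U1 := inF_bezout_coef F (eq_leq sU) sV e.
exists U, (V - h *: U); split; first split => //.
- rewrite (leq_trans (size_polyD _ _)) // geq_max sV size_polyN.
  by rewrite (leq_trans (size_scale_leq _ _)) ?sU.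
- by rewrite -e mulrDl mulrBr -scalerAl -scalerAr addrACA subrr addr0.
- by rewrite coefB coefZ U1 mulr1 opprB addrC.
Qed.

Lemma is_phi_functional A B c1 c2 : inF n A B ->
  is_phi n A B c1 -> is_phi n A B c2 -> c1 = c2.
Proof.
move=> F [U1 [V1 [b1 ->]]] [U2 [V2 [b2 ->]]].
have [UV [_ uniqUV]] := bezout_sol_exists_unique F.
by have := uniqUV (U1, V1) b1; rewrite (uniqUV (U2, V2) b2) => -[_ ->].
Qed.

End FractionSpace.

Theorem lemma3p18 (R : comUnitRingType) (n : nat) (hn : (1 <= n)%N) :
  (forall A B : {poly R}, inF n A B ->
     exists! UV : {poly R} * {poly R}, bezout_sol n A B UV.1 UV.2) /\
  (forall (A B : {poly R}) (h c : R), inF n A B -> is_phi n A B c ->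
     inF n (A + h *: B) B /\ is_phi n (A + h *: B) B (c + h)) /\
  (forall (A0 B0 : {poly R}) (h : R), inF n A0 B0 -> is_phi n A0 B0 0 ->
     inF n (A0 + h *: B0) B0) /\
  (forall A B : {poly R}, inF n A B ->
     exists! ABh : ({poly R} * {poly R}) * R,
       [/\ inF n ABh.1.1 ABh.1.2, is_phi n ABh.1.1 ABh.1.2 0,
           A = ABh.1.1 + ABh.2 *: ABh.1.2 & B = ABh.1.2]).
Proof.
split; first exact: bezout_sol_exists_unique.
split; first by move=> A B h c F p; split; [exact: inF_shift | exact: is_phi_shift].
split; first by move=> A0 B0 h F _; exact: inF_shift.
move=> A B F; have [c pc] := is_phi_exists hn F.
exists ((A - c *: B, B), c); split.
  split => //=; rewrite -?scaleNr; first exact: inF_shift.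
    by have := is_phi_shift hn (- c) F pc; rewrite subrr.
  by rewrite scaleNr subrK.
move=> [[A0 B0] h] /= [F0 p0 eA eB]; subst A B.
have := is_phi_shift hn h F0 p0; rewrite add0r => /(is_phi_functional hn F pc) <-.
by rewrite addrK.
Qed.
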